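(* Let $(A,[\cdot,\cdot],\circ)$ and $(V,[\cdot,\cdot]_V,\circ_V)$ be Malcev-Poisson algebras and $\varrho,\mu:A\to\mathrm{End}(V)$ linear maps. Then $(V,\circ_V,[\cdot,\cdot]_V,\mu,\varrho)$ is an $A$-module Malcev-Poisson algebra if and only if $A\oplus V$ is a Malcev-Poisson algebra with the operations $$\{x+a,y+b\}=[x,y]+\varrho(x)b-\varrho(y)a+[a,b]_V,\qquad (x+a)\bullet(y+b)=x\circ y+\mu(x)b+\mu(y)a+a\circ_Vb,$$ for $x,y\in A$, $a,b\in V$.
   Context: Field $\mathbb{K}$ algebraically closed, characteristic $0$; spaces finite-dimensional. Malcev algebra: antisymmetric bracket with $J(x,y,[x,z])=[J(x,y,z),x]$, $J(x,y,z)=[[x,y],z]+[[z,x],y]+[[y,z],x]$. Malcev-Poisson algebra: Malcev bracket plus commutative associative product $\circ$ with $[x,y\circ z]=[x,y]\circ z+y\circ[x,z]$. Representations: Malcev, $\varrho([[x,y],z])=\varrho(z)\varrho(y)\varrho(x)-\varrho(y)\varrho(x)\varrho(z)+\varrho(x)\varrho([y,z])+\varrho([x,z])\varrho(y)$; associative, $\mu(x\circ y)=\mu(x)\mu(y)$; Malcev-Poisson, $(V,\varrho,\mu)$ with both and $\varrho(x\circ y)=\mu(y)\varrho(x)+\mu(x)\varrho(y)$, $\mu([x,y])=\varrho(x)\mu(y)-\mu(y)\varrho(x)$. $A$-module Malcev algebra $(V,[\cdot,\cdot]_V,\varrho)$: $\varrho$ a Malcev representation and for $x,y\in A$, $a,b,c\in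 V$: $\varrho([x,y])[a,b]_V=\varrho(x)[\varrho(y)a,b]_V-[\varrho(y)\varrho(x)a,b]_V-[\varrho(x)\varrho(y)b,a]_V+\varrho(y)[\varrho(x)b,a]_V$; $[\varrho(x)a,\varrho(y)b]_V=[\varrho([x,y])a,b]_V-\varrho(x)[\varrho(y)a,b]_V+\varrho(y)\varrho(x)[a,b]_V+[\varrho(y)\varrho(x)b,a]_V$; $[\varrho(x)a,[b,c]_V]_V=[[\varrho(x)b,a]_V,c]_V-\varrho(x)[[b,a]_V,c]_V-[\varrho(x)[a,c]_V,b]_V-[[\varrho(x)c,b]_V,a]_V$. $A$-module associative algebra $(V,\circ_V,\mu)$: $\mu$ an associative representation and $\mu(x)(a\circ_Vb)=(\mu(x)a)\circ_Vb$. $A$-module Malcev-Poisson algebra $(V,\circ_V,[\cdot,\cdot]_V,\mu,\varrho)$: $(V,[\cdot,\cdot]_V,\varrho)$ an $A$-module Malcev algebra, $(V,\circ_V,\mu)$ an $A$-module associative algebra, $(V,\varrho,\mu)$ a Malcev-Poisson representation of $A$, and $\varrho(x)(a\circ_Vb)=(\varrho(x)a)\circ_Vb+a\circ_V(\varrho(x)b)$, $[a,\mu(x)b]_V=-(\varrho(x)a)\circ_Vb+\mu(x)[a,b]_V$ for all $x\in A$, $a,b\in V$. *)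

From HB Require Import structures.
From mathcomp Require Import all_boot all_order all_algebra.
Set Implicit Arguments. Unset Strict Implicit. Unset Printing Implicit Defensive.
Import GRing.Theory.
Local Open Scope ring_scope.

Definition lin {K : fieldType} {U W : lmodType K} (f : U -> W) : Prop :=
  forall (a : K) x y, f (a *: x + y) = a *: f x + f y.

Definition bilin {K : fieldType} {U W : lmodType K} (f : U -> U -> W) : Prop :=
  (forall z (a : K) x y, f (a *: x + y) z = a *: f x z + f y z) /\
  (forall z (a : K) x y, f z (a *: x + y) = a *: f z x + f z y).

Definition lin_end {K : fieldType} {U W : lmodType K} (rho : U -> W -> W) : Prop :=
  (forall x, lin (rho x)) /\
  (forall (a : K) x y v, rho (a *: x + y) v = a *: rho x v + rho y v).

Definition jac {K : fieldType} {U : lmodType K} (br : U -> U -> U) (x y z : U) : U :=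
  br (br x y) z + br (br z x) y + br (br y z) x.

Definition malcev {K : fieldType} {U : lmodType K} (br : U -> U -> U) : Prop :=
  [/\ bilin br,
      (forall x y, br x y = - br y x) &
      (forall x y z, jac br x y (br x z) = br (jac br x y z) x)].

Definition malcev_poisson {K : fieldType} {U : lmodType K}
    (br pr : U -> U -> U) : Prop :=
  [/\ malcev br, bilin pr,
      (forall x y, pr x y = pr y x),
      (forall x y z, pr x (pr y z) = pr (pr x y) z) &
      (forall x y z, br x (pr y z) = pr (br x y) z + pr y (br x z))].

Section Modules.
Variables (K : fieldType) (A V : lmodType K).
Variables (brA prA : A -> A -> A) (brV prV : V -> V -> V) (rho mu : A -> V -> V).

Definition malcev_rep : Prop :=
  forall x y z v,
    rho (brA (brA x y) z) v =
      rho z (rho y (rho x v)) - rho y (rho x (rho z v))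
      + rho x (rho (brA y z) v) + rho (brA x z) (rho y v).

Definition assoc_rep : Prop :=
  forall x y v, mu (prA x y) v = mu x (mu y v).

Definition mp_rep : Prop :=
  [/\ malcev_rep, assoc_rep,
      (forall x y v, rho (prA x y) v = mu y (rho x v) + mu x (rho y v)) &
      (forall x y v, mu (brA x y) v = rho x (mu y v) - mu y (rho x v))].

Definition module_malcev : Prop :=
  [/\ malcev_rep,
    (forall x y a b,
      rho (brA x y) (brV a b) =
        rho x (brV (rho y a) b) - brV (rho y (rho x a)) b
        - brV (rho x (rho y b)) a + rho y (brV (rho x b) a)),
    (forall x y a b,
      brV (rho x a) (rho y b) =
        brV (rho (brA x y) a) b - rho x (brV (rho y a) b)
        + rho y (rho x (brV a b)) + brV (rho y (rho x b)) a) &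
    (forall x a b c,
      brV (rho x a) (brV b c) =
        brV (brV (rho x b) a) c - rho x (brV (brV b a) c)
        - brV (rho x (brV a c)) b - brV (brV (rho x c) b) a)].

Definition module_assoc : Prop :=
  assoc_rep /\ (forall x a b, mu x (prV a b) = prV (mu x a) b).

Definition module_malcev_poisson : Prop :=
  [/\ module_malcev, module_assoc, mp_rep,
      (forall x a b, rho x (prV a b) = prV (rho x a) b + prV a (rho x b)) &
      (forall x a b, brV a (mu x b) = - prV (rho x a) b + mu x (brV a b))].

(* operations on the direct sum A ⊕ V, represented as the product A * V *)
Definition dsum_br (p q : A * V) : A * V :=
  (brA p.1 q.1, rho p.1 q.2 - rho q.1 p.2 + brV p.2 q.2).

Definition dsum_pr (p q : A * V) : A * V :=
  (prA p.1 q.1, mu p.1 q.2 + mu q.1 p.2 + prV p.2 q.2).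

End Modules.

From HB Require Import structures.
From mathcomp Require Import all_boot all_order all_algebra.
Set Implicit Arguments. Unset Strict Implicit. Unset Printing Implicit Defensive.
Import GRing.Theory.
Local Open Scope ring_scope.

(* All the operations of A ⊕ V are multilinear, so each axiom of a Malcev-Poisson
   algebra on A ⊕ V splits, by evaluating it on elements (x, 0) and (0, a), into the
   axiom on A, the axiom on V and the module conditions; conversely the V-component
   of each axiom on A ⊕ V is a signed sum of instances of these.  Every step is thus
   a linear identity between nonassociative expressions, decided by reflection:
   expressions are expanded into signed monomials, brackets and products are put in
   a canonical orientation using (anti)commutativity, and the monomials must cancel. *)

(** * Biadditive maps *)

Definition negif {U : zmodType} (b : bool) (x : U) : U := if b then - x else x.

Section Biadditive.
Variables (U1 U2 W : zmodType).

Definition biadditive (f : U1 -> U2 -> W) : Prop :=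
  (forall x y z, f (x + y) z = f x z + f y z) /\
  (forall x y z, f z (x + y) = f z x + f z y).

Variables (f : U1 -> U2 -> W) (f_biadd : biadditive f).
Let fDl := proj1 f_biadd.
Let fDr := proj2 f_biadd.

Lemma biadd0l z : f 0 z = 0.
Proof. by apply: (addrI (f 0 z)); rewrite -fDl !addr0. Qed.

Lemma biadd0r z : f z 0 = 0.
Proof. by apply: (addrI (f z 0)); rewrite -fDr !addr0. Qed.

Lemma biaddNl x z : f (- x) z = - f x z.
Proof. by apply: (addrI (f x z)); rewrite -fDl !subrr biadd0l. Qed.

Lemma biaddNr x z : f z (- x) = - f z x.
Proof. by apply: (addrI (f z x)); rewrite -fDr !subrr biadd0r. Qed.

Lemma biadd_negif b c x y : f (negif b x) (negif c y) = negif (b (+) c) (f x y).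
Proof. by case: b; case: c; rewrite /= ?biaddNl ?biaddNr ?opprK. Qed.

End Biadditive.

Definition alternating {U W : zmodType} (f : U -> U -> W) : Prop := forall x, f x x = 0.

Lemma alternating_anti (U W : zmodType) (f : U -> U -> W) :
  biadditive f -> alternating f -> forall x y, f x y = - f y x.
Proof.
move=> [fDl fDr] f_alt x y; apply/eqP; rewrite -subr_eq0 opprK.
by have := f_alt (x + y); rewrite fDl !fDr !f_alt add0r addr0 => ->.
Qed.

(** * Deciding identities by reflection *)

Inductive termA : Type :=
  | AVar of nat | AZero | AAdd of termA & termA | AOpp of termA
  | ABr of termA & termA | APr of termA & termA.

Inductive termV : Type :=
  | VVar of nat | VZero | VAdd of termV & termV | VOpp of termV | VMuln of termV & nat
  | VBr of termV & termV | VPr of termV & termV | VRho of termA & termV | VMu of termA & termV.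

Fixpoint eq_termA (s t : termA) : bool :=
  match s, t with
  | AVar n, AVar m => n == m
  | AZero, AZero => true
  | AAdd s1 s2, AAdd t1 t2 | ABr s1 s2, ABr t1 t2 | APr s1 s2, APr t1 t2 =>
      eq_termA s1 t1 && eq_termA s2 t2
  | AOpp s1, AOpp t1 => eq_termA s1 t1
  | _, _ => false
  end.

Lemma eq_termAP : Equality.axiom eq_termA.
Proof.
move=> s t; apply: (iffP idP) => [|<-]; last by elim: s => //= *; apply/andP.
elim: s t => [n||s1 IH1 s2 IH2|s1 IH1|s1 IH1 s2 IH2|s1 IH1 s2 IH2]
  [m||t1 t2|t1|t1 t2|t1 t2] //=.
- by move/eqP=> ->.
- by case/andP=> /IH1 -> /IH2 ->.
- by move/IH1=> ->.
- by case/andP=> /IH1 -> /IH2 ->.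
- by case/andP=> /IH1 -> /IH2 ->.
Qed.

HB.instance Definition _ := hasDecEq.Build termA eq_termAP.

Fixpoint eq_termV (s t : termV) : bool :=
  match s, t with
  | VVar n, VVar m => n == m
  | VZero, VZero => true
  | VAdd s1 s2, VAdd t1 t2 | VBr s1 s2, VBr t1 t2 | VPr s1 s2, VPr t1 t2 =>
      eq_termV s1 t1 && eq_termV s2 t2
  | VOpp s1, VOpp t1 => eq_termV s1 t1
  | VMuln s1 n, VMuln t1 m => eq_termV s1 t1 && (n == m)
  | VRho x1 s1, VRho y1 t1 | VMu x1 s1, VMu y1 t1 => (x1 == y1) && eq_termV s1 t1
  | _, _ => false
  end.

Lemma eq_termVP : Equality.axiom eq_termV.
Proof.
move=> s t; apply: (iffP idP) => [|<-].
  2: by elim: s => //= *; rewrite ?eqxx //; apply/andP.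
elim: s t => [n||s1 IH1 s2 IH2|s1 IH1|s1 IH1 n|s1 IH1 s2 IH2|s1 IH1 s2 IH2
             |x1 s1 IH1|x1 s1 IH1]
  [m||t1 t2|t1|t1 m|t1 t2|t1 t2|y1 t1|y1 t1] //=.
- by move/eqP=> ->.
- by case/andP=> /IH1 -> /IH2 ->.
- by move/IH1=> ->.
- by case/andP=> /IH1 -> /eqP ->.
- by case/andP=> /IH1 -> /IH2 ->.
- by case/andP=> /IH1 -> /IH2 ->.
- by case/andP=> /eqP -> /IH1 ->.
- by case/andP=> /eqP -> /IH1 ->.
Qed.

HB.instance Definition _ := hasDecEq.Build termV eq_termVP.

(* A prefix code, used only to orient brackets and products; the soundness of the
   normal form does not depend on it. *)
Fixpoint codeA (s : termA) : seq nat :=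
  match s with
  | AVar n => [:: 0; n]%N | AZero => [:: 1]%N
  | AAdd s t => 2%N :: codeA s ++ codeA t | AOpp s => 3%N :: codeA s
  | ABr s t => 4%N :: codeA s ++ codeA t | APr s t => 5%N :: codeA s ++ codeA t
  end.

Fixpoint codeV (s : termV) : seq nat :=
  match s with
  | VVar n => [:: 0; n]%N | VZero => [:: 1]%N
  | VAdd s t => 2%N :: codeV s ++ codeV t | VOpp s => 3%N :: codeV s
  | VMuln s n => [:: 4, n & codeV s]%N
  | VBr s t => 5%N :: codeV s ++ codeV t | VPr s t => 6%N :: codeV s ++ codeV t
  | VRho x s => 7%N :: codeA x ++ codeV s | VMu x s => 8%N :: codeA x ++ codeV s
  end.

Fixpoint lexlt (s t : seq nat) : bool :=
  match s, t with
  | [::], [::] => false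
  | [::], _ => true
  | _, [::] => false
  | m :: s', n :: t' => (m < n)%N || (m == n) && lexlt s' t'
  end.

Definition opp_nf {M : Type} (l : seq (bool * M)) := [seq (~~ p.1, p.2) | p <- l].

Definition mul_nf {M1 M2 M3 : Type} (mk : bool * M1 -> bool * M2 -> seq (bool * M3))
    (l1 : seq (bool * M1)) (l2 : seq (bool * M2)) : seq (bool * M3) :=
  flatten [seq flatten [seq mk p q | q <- l2] | p <- l1].

Definition mul_free {M1 M2 M3 : Type} (op : M1 -> M2 -> M3) p q : seq (bool * M3) :=
  [:: (p.1 (+) q.1, op p.2 q.2)].

Definition mul_comm {M : Type} (code : M -> seq nat) (op : M -> M -> M) p q : seq (bool * M) :=
  if lexlt (code q.2) (code p.2) then [:: (p.1 (+) q.1, op q.2 p.2)]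
  else [:: (p.1 (+) q.1, op p.2 q.2)].

Definition mul_alt {M : eqType} (code : M -> seq nat) (op : M -> M -> M) p q : seq (bool * M) :=
  if p.2 == q.2 then [::]
  else if lexlt (code q.2) (code p.2) then [:: (~~ (p.1 (+) q.1), op q.2 p.2)]
  else [:: (p.1 (+) q.1, op p.2 q.2)].

Fixpoint nfA (s : termA) : seq (bool * termA) :=
  match s with
  | AVar n => [:: (false, AVar n)] | AZero => [::]
  | AAdd s t => nfA s ++ nfA t | AOpp s => opp_nf (nfA s)
  | ABr s t => mul_nf (mul_alt codeA ABr) (nfA s) (nfA t)
  | APr s t => mul_nf (mul_comm codeA APr) (nfA s) (nfA t)
  end.

Fixpoint nfV (s : termV) : seq (bool * termV) :=
  match s with
  | VVar n => [:: (false, VVar n)] | VZero => [::]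
  | VAdd s t => nfV s ++ nfV t | VOpp s => opp_nf (nfV s)
  | VMuln s n => flatten (nseq n (nfV s))
  | VBr s t => mul_nf (mul_alt codeV VBr) (nfV s) (nfV t)
  | VPr s t => mul_nf (mul_comm codeV VPr) (nfV s) (nfV t)
  | VRho x s => mul_nf (mul_free VRho) (nfA x) (nfV s)
  | VMu x s => mul_nf (mul_free VMu) (nfA x) (nfV s)
  end.

Definition cancels {M : eqType} (l : seq (bool * M)) : bool :=
  all (fun p => count_mem (true, p.2) l == count_mem (false, p.2) l) l.

Section NormalFormEval.
Variables (U : zmodType) (M : eqType) (ev : M -> U).

Fixpoint eval_nf (l : seq (bool * M)) : U :=
  if l is p :: l' then negif p.1 (ev p.2) + eval_nf l' else 0.

Lemma eval_nf_cat l1 l2 : eval_nf (l1 ++ l2) = eval_nf l1 + eval_nf l2.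
Proof. by elim: l1 => [|p l IH] /=; rewrite ?add0r // IH addrA. Qed.

Lemma eval_nf_opp l : eval_nf (opp_nf l) = - eval_nf l.
Proof. by elim: l => [|[[] m] l IH] /=; rewrite ?oppr0 // IH opprD ?opprK. Qed.

Lemma eval_nf_nseq n l : eval_nf (flatten (nseq n l)) = eval_nf l *+ n.
Proof. by elim: n => [|n IH] //=; rewrite eval_nf_cat IH mulrS. Qed.

Lemma eval_nf_filter (P : pred (bool * M)) l :
  eval_nf l = eval_nf (filter P l) + eval_nf (filter (predC P) l).
Proof.
elim: l => [|p l IH] /=; first by rewrite addr0.
by case: (P p); rewrite /= IH; [exact: addrA | exact: addrCA].
Qed.

Lemma eval_nf_const m l : all (fun q => q.2 == m) l ->
  eval_nf l = ev m *+ count_mem (false, m) l - ev m *+ count_mem (true, m) l.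
Proof.
elim: l => [|[b m'] l IH] /=; first by rewrite subrr.
case/andP=> /eqP -> /IH ->; case: b; rewrite /= eqxx ?add0n ?add1n mulrS.
  by rewrite opprD addrCA.
by rewrite addrA.
Qed.

Lemma cancels_eval l : cancels l -> eval_nf l = 0.
Proof.
elim: {l}(size l) {-2}l (leqnn (size l)) => [|n IH] [|p l] //= size_l l_canc.
set P := fun q : bool * M => q.2 == p.2.
rewrite -[_ + _]/(eval_nf (p :: l)) (eval_nf_filter P).
have countP b : count_mem (b, p.2) (filter P (p :: l)) = count_mem (b, p.2) (p :: l).
  by rewrite count_filter; apply: eq_count => q /=; case: eqP => [->|//]; rewrite /P eqxx.
rewrite (eval_nf_const (m := p.2)) ?filter_all // !countP.
move/andP: (l_canc) => [/eqP -> _]; rewrite subrr add0r.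
apply: IH.
  by rewrite /= /P eqxx size_filter; exact: leq_trans (count_size _ l) size_l.
apply/allP=> q; rewrite mem_filter => /andP[/= q_notP q_in].
have countPC b : count_mem (b, q.2) (filter (predC P) (p :: l)) = count_mem (b, q.2) (p :: l).
  rewrite count_filter; apply: eq_count => r /=.
  by case: eqP => [->|//]; rewrite /P /= q_notP.
by rewrite !countPC; exact: (allP l_canc).
Qed.

End NormalFormEval.

Section ProductEval.
Variables (U1 U2 W : zmodType) (f : U1 -> U2 -> W) (f_biadd : biadditive f).
Variables (M1 M2 M3 : eqType) (e1 : M1 -> U1) (e2 : M2 -> U2) (e3 : M3 -> W).

Lemma eval_mul_nf (mk : bool * M1 -> bool * M2 -> seq (bool * M3)) :
    (forall p q, eval_nf e3 (mk p q) = f (negif p.1 (e1 p.2)) (negif q.1 (e2 q.2))) ->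
  forall l1 l2, eval_nf e3 (mul_nf mk l1 l2) = f (eval_nf e1 l1) (eval_nf e2 l2).
Proof.
case: f_biadd => fDl fDr mkE l1 l2; rewrite /mul_nf.
elim: l1 => [|p l1 IH] /=; first by rewrite biadd0l.
rewrite eval_nf_cat IH fDl; congr (_ + _); elim: l2 {IH} => [|q l2 IH2] /=.
  by rewrite biadd0r.
by rewrite eval_nf_cat IH2 mkE fDr.
Qed.

Lemma eval_mul_free (op : M1 -> M2 -> M3) :
    (forall m1 m2, e3 (op m1 m2) = f (e1 m1) (e2 m2)) ->
  forall p q, eval_nf e3 (mul_free op p q) = f (negif p.1 (e1 p.2)) (negif q.1 (e2 q.2)).
Proof. by move=> opE p q; rewrite /= addr0 biadd_negif // opE. Qed.

End ProductEval.

Section SymmetricProductEval.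
Variables (U W : zmodType) (f : U -> U -> W) (f_biadd : biadditive f).
Variables (M : eqType) (e1 : M -> U) (e3 : M -> W) (code : M -> seq nat) (op : M -> M -> M).
Hypothesis opE : forall m1 m2, e3 (op m1 m2) = f (e1 m1) (e1 m2).

Lemma eval_mul_comm : commutative f ->
  forall p q, eval_nf e3 (mul_comm code op p q) = f (negif p.1 (e1 p.2)) (negif q.1 (e1 q.2)).
Proof.
move=> fC p q; rewrite biadd_negif // /mul_comm.
by case: ifP => _ /=; rewrite addr0 opE // fC.
Qed.

Lemma eval_mul_alt : alternating f ->
  forall p q, eval_nf e3 (mul_alt code op p q) = f (negif p.1 (e1 p.2)) (negif q.1 (e1 q.2)).
Proof.
move=> f_alt p q; rewrite biadd_negif // /mul_alt.
case: eqP => [->|_]; first by rewrite f_alt; case: (_ (+) _); rewrite /= ?oppr0.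
case: ifP => _ /=; rewrite addr0 opE //.
by case: (_ (+) _); rewrite /= (alternating_anti f_biadd f_alt (e1 q.2)) ?opprK.
Qed.

End SymmetricProductEval.

Section TermEval.
Variables (A V : zmodType) (brA prA : A -> A -> A) (brV prV : V -> V -> V).
Variables (rho mu : A -> V -> V) (envA : seq A) (envV : seq V).

Fixpoint evalA (s : termA) : A :=
  match s with
  | AVar n => nth 0 envA n | AZero => 0
  | AAdd s t => evalA s + evalA t | AOpp s => - evalA s
  | ABr s t => brA (evalA s) (evalA t) | APr s t => prA (evalA s) (evalA t)
  end.

Fixpoint evalV (s : termV) : V :=
  match s with
  | VVar n => nth 0 envV n | VZero => 0
  | VAdd s t => evalV s + evalV t | VOpp s => - evalV s | VMuln s n => evalV s *+ n
  | VBr s t => brV (evalV s) (evalV t) | VPr s t => prV (evalV s) (evalV t)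
  | VRho x s => rho (evalA x) (evalV s) | VMu x s => mu (evalA x) (evalV s)
  end.

Hypotheses (brA_biadd : biadditive brA) (prA_biadd : biadditive prA).
Hypotheses (brV_biadd : biadditive brV) (prV_biadd : biadditive prV).
Hypotheses (rho_biadd : biadditive rho) (mu_biadd : biadditive mu).
Hypotheses (brA_alt : alternating brA) (brV_alt : alternating brV).
Hypotheses (prA_comm : commutative prA) (prV_comm : commutative prV).

Lemma eval_nfA s : eval_nf evalA (nfA s) = evalA s.
Proof.
elim: s => [n||s IHs t IHt|s IHs|s IHs t IHt|s IHs t IHt] /=; rewrite ?addr0 //.
- by rewrite eval_nf_cat IHs IHt.
- by rewrite eval_nf_opp IHs.
- by rewrite (eval_mul_nf (e1 := evalA) (e2 := evalA) brA_biadd) -?IHs -?IHt //;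
  exact: eval_mul_alt.
- by rewrite (eval_mul_nf (e1 := evalA) (e2 := evalA) prA_biadd) -?IHs -?IHt //;
  exact: eval_mul_comm.
Qed.

Lemma eval_nfV s : eval_nf evalV (nfV s) = evalV s.
Proof.
elim: s => [n||s IHs t IHt|s IHs|s IHs n|s IHs t IHt|s IHs t IHt|x s IHs|x s IHs] /=;
  rewrite ?addr0 //.
- by rewrite eval_nf_cat IHs IHt.
- by rewrite eval_nf_opp IHs.
- by rewrite eval_nf_nseq IHs.
- by rewrite (eval_mul_nf (e1 := evalV) (e2 := evalV) brV_biadd) -?IHs -?IHt //;
  exact: eval_mul_alt.
- by rewrite (eval_mul_nf (e1 := evalV) (e2 := evalV) prV_biadd) -?IHs -?IHt //;
  exact: eval_mul_comm.
- by rewrite (eval_mul_nf (e1 := evalA) (e2 := evalV) rho_biadd) ?eval_nfA ?IHs //;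
  exact: eval_mul_free.
- by rewrite (eval_mul_nf (e1 := evalA) (e2 := evalV) mu_biadd) ?eval_nfA ?IHs //;
  exact: eval_mul_free.
Qed.

Lemma evalV_eq s t : cancels (nfV (VAdd s (VOpp t))) -> evalV s = evalV t.
Proof.
move=> canc; apply/subr0_eq; rewrite -[LHS]/(evalV (VAdd s (VOpp t))) -eval_nfV.
exact: cancels_eval.
Qed.

End TermEval.

Record eqn (T : Type) := Eqn { eqn_lhs : T; eqn_rhs : T; eqn_holds : eqn_lhs = eqn_rhs }.
Arguments Eqn {T eqn_lhs eqn_rhs}.

Definition eqn_sym (T : Type) (e : eqn T) : eqn T := Eqn (esym (eqn_holds e)).

Definition eqn_defect (U : zmodType) (e : eqn U) : U := eqn_lhs e - eqn_rhs e.

Lemma sum_eqn_defect (U : zmodType) (es : seq (eqn U)) : \sum_(e <- es) eqn_defect e = 0.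
Proof. by rewrite big1 // => e _; rewrite /eqn_defect (eqn_holds e) subrr. Qed.

Lemma eq_of_defects (U : zmodType) (es : seq (eqn U)) (u w : U) :
  u - w = \sum_(e <- es) eqn_defect e -> u = w.
Proof. by rewrite sum_eqn_defect => /subr0_eq. Qed.

Arguments eq_of_defects {U} es {u w}.

Section Modules.
Variables (K : fieldType) (U W : lmodType K).
Hypothesis two_neq0 : (2%:R : K) != 0.

Lemma eq0_of_mulr2n (v : W) : v *+ 2 = 0 -> v = 0.
Proof. by rewrite -scaler_nat => /eqP; rewrite scaler_eq0 (negbTE two_neq0) => /eqP. Qed.

Lemma eq_of_defects2 (es : seq (eqn W)) (u w : W) :
  (u - w) *+ 2 = \sum_(e <- es) eqn_defect e -> u = w.
Proof. by rewrite sum_eqn_defect => /eq0_of_mulr2n /subr0_eq. Qed.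

Lemma bilin_biadditive (f : U -> U -> W) : bilin f -> biadditive f.
Proof. by case=> fl fr; split=> x y z; rewrite -{1}[x]scale1r (fl, fr) scale1r. Qed.

Lemma lin_end_biadditive (rho : U -> W -> W) : lin_end rho -> biadditive rho.
Proof.
by case=> rr rl; split=> x y z; rewrite -{1}[x]scale1r; [rewrite rl | rewrite (rr z)];
  rewrite scale1r.
Qed.

Lemma anti_alternating (f : U -> U -> W) :
  (forall x y, f x y = - f y x) -> alternating f.
Proof. by move=> f_anti x; apply: eq0_of_mulr2n; rewrite mulr2n {1}f_anti addNr. Qed.

End Modules.

Arguments eq_of_defects2 {K W} two_neq0 es {u w}.

(** * The direct sum A ⊕ V *)

Definition leibniz (U : zmodType) (br pr : U -> U -> U) : Prop :=
  forall x y z, br x (pr y z) = pr (br x y) z + pr y (br x z).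

Definition malcev_identity (K : fieldType) (U : lmodType K) (br : U -> U -> U) : Prop :=
  forall x y z, jac br x y (br x z) = br (jac br x y z) x.

Section DirectSum.
Variables (K : fieldType) (A V : lmodType K).
Variables (brA prA : A -> A -> A) (brV prV : V -> V -> V) (rho mu : A -> V -> V).
Hypotheses (brA_bilin : bilin brA) (prA_bilin : bilin prA).
Hypotheses (brV_bilin : bilin brV) (prV_bilin : bilin prV).
Hypotheses (rho_lin : lin_end rho) (mu_lin : lin_end mu).
Hypotheses (brA_anti : forall x y, brA x y = - brA y x).
Hypotheses (brV_anti : forall a b, brV a b = - brV b a).
Hypotheses (prA_comm : commutative prA) (prV_comm : commutative prV).
Hypothesis two_neq0 : (2%:R : K) != 0.

Local Notation dbr := (dsum_br brA brV rho).
Local Notation dpr := (dsum_pr prA prV mu).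

Ltac add_atom t l := lazymatch l with context [t :: _] => l | _ => constr:(t :: l) end.

Ltac index t l :=
  lazymatch l with t :: _ => constr:(0%N) | _ :: ?l => let n := index t l in constr:(n.+1) end.

Ltac atomsA t l :=
  lazymatch t with
  | 0 => l
  | ?s + ?u => let l := atomsA s l in atomsA u l
  | - ?s => atomsA s l
  | brA ?s ?u => let l := atomsA s l in atomsA u l
  | prA ?s ?u => let l := atomsA s l in atomsA u l
  | _ => add_atom t l
  end.

Ltac atomsV t la lv :=
  lazymatch t with
  | 0 => constr:((la, lv))
  | ?s + ?u => lazymatch atomsV s la lv with (?la, ?lv) => atomsV u la lv end
  | - ?s => atomsV s la lv
  | ?s *+ _ => atomsV s la lv
  | brV ?s ?u => lazymatch atomsV s la lv with (?la, ?lv) => atomsV u la lv end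
  | prV ?s ?u => lazymatch atomsV s la lv with (?la, ?lv) => atomsV u la lv end
  | rho ?x ?s => let la := atomsA x la in atomsV s la lv
  | mu ?x ?s => let la := atomsA x la in atomsV s la lv
  | _ => let lv := add_atom t lv in constr:((la, lv))
  end.

Ltac reifyA t la :=
  lazymatch t with
  | 0 => constr:(AZero)
  | ?s + ?u => let s := reifyA s la in let u := reifyA u la in constr:(AAdd s u)
  | - ?s => let s := reifyA s la in constr:(AOpp s)
  | brA ?s ?u => let s := reifyA s la in let u := reifyA u la in constr:(ABr s u)
  | prA ?s ?u => let s := reifyA s la in let u := reifyA u la in constr:(APr s u)
  | _ => let n := index t la in constr:(AVar n)
  end.

Ltac reifyV t la lv :=
  lazymatch t with
  | 0 => constr:(VZero)
  | ?s + ?u => let s := reifyV s la lv in let u := reifyV u la lv in constr:(VAdd s u)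
  | - ?s => let s := reifyV s la lv in constr:(VOpp s)
  | ?s *+ ?n => let s := reifyV s la lv in constr:(VMuln s n)
  | brV ?s ?u => let s := reifyV s la lv in let u := reifyV u la lv in constr:(VBr s u)
  | prV ?s ?u => let s := reifyV s la lv in let u := reifyV u la lv in constr:(VPr s u)
  | rho ?x ?s => let x := reifyA x la in let s := reifyV s la lv in constr:(VRho x s)
  | mu ?x ?s => let x := reifyA x la in let s := reifyV s la lv in constr:(VMu x s)
  | _ => let n := index t lv in constr:(VVar n)
  end.

Let brA_alt := anti_alternating two_neq0 brA_anti.
Let brV_alt := anti_alternating two_neq0 brV_anti.

(* Proves an equation between V-valued expressions that holds for all biadditive
   operations with alternating brackets and commutative products. *)
Ltac mp_identity :=
  rewrite ?big_cons ?big_nil; unfold eqn_defect, jac, dsum_br, dsum_pr; simpl;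
  lazymatch goal with |- ?u = ?w =>
  lazymatch atomsV u (@nil A) (@nil V) with (?la, ?lv) =>
  lazymatch atomsV w la lv with (?la, ?lv) =>
    let s := reifyV u la lv in let t := reifyV w la lv in
    apply: (@evalV_eq _ _ brA prA brV prV rho mu la lv
      (bilin_biadditive brA_bilin) (bilin_biadditive prA_bilin)
      (bilin_biadditive brV_bilin) (bilin_biadditive prV_bilin)
      (lin_end_biadditive rho_lin) (lin_end_biadditive mu_lin)
      brA_alt brV_alt prA_comm prV_comm s t);
    vm_compute; reflexivity
  end end end.

Lemma dsum_br_anti X Y : dbr X Y = - dbr Y X.
Proof.
case: X Y => [x a] [y b]; apply: injective_projections; first exact: brA_anti.
by mp_identity.
Qed.

Lemma dsum_br_bilin : bilin dbr.
Proof.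
have linE (a : K) (u1 u2 u3 v1 v2 v3 : V) :
    a *: u1 + v1 - (a *: u2 + v2) + (a *: u3 + v3) = a *: (u1 - u2 + u3) + (v1 - v2 + v3).
  by rewrite opprD (addrACA (a *: u1)) (addrACA (a *: u1 - _)) !scalerDr scalerN.
case: brA_bilin brV_bilin rho_lin => [bAl bAr] [bVl bVr] [rr rl].
split=> [[z1 z2] a [x1 x2] [y1 y2]|[z1 z2] a [x1 x2] [y1 y2]];
  apply: injective_projections => /=; by rewrite ?bAl ?bAr ?bVl ?bVr ?rl ?rr ?linE.
Qed.

Lemma dsum_pr_bilin : bilin dpr.
Proof.
have linE (a : K) (u1 u2 u3 v1 v2 v3 : V) :
    a *: u1 + v1 + (a *: u2 + v2) + (a *: u3 + v3) = a *: (u1 + u2 + u3) + (v1 + v2 + v3).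
  by rewrite (addrACA (a *: u1)) (addrACA (a *: u1 + _)) !scalerDr.
case: prA_bilin prV_bilin mu_lin => [pAl pAr] [pVl pVr] [mr ml].
split=> [[z1 z2] a [x1 x2] [y1 y2]|[z1 z2] a [x1 x2] [y1 y2]];
  apply: injective_projections => /=; by rewrite ?pAl ?pAr ?pVl ?pVr ?ml ?mr ?linE.
Qed.

Lemma dsum_pr_comm : commutative dpr.
Proof.
case=> x a [y b]; apply: injective_projections; first exact: prA_comm.
by mp_identity.
Qed.

Lemma dsum_br_malcev_identity : module_malcev brA brV rho ->
  malcev_identity brA -> malcev_identity brV -> malcev_identity dbr.
Proof.
case=> rep rho_brV brV_rho_rho brV_rho_brV mA mV [x a] [y b] [z c].
apply: injective_projections; first exact: mA.
apply: (eq_of_defects [:: Eqn (esym (rep x x y c)); Eqn (rep x x z b);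
  Eqn (esym (rep x y z a)); Eqn (rep x z x b); Eqn (esym (rep y z x a));
  Eqn (brV_rho_rho x x b c); Eqn (rho_brV x y a c); Eqn (brV_rho_rho x y c a);
  Eqn (rho_brV x z b a); Eqn (brV_rho_rho y z a a); Eqn (brV_rho_rho z x a b);
  Eqn (esym (brV_rho_brV x a b c)); Eqn (esym (brV_rho_brV x a c b));
  Eqn (esym (brV_rho_brV x b c a)); Eqn (esym (brV_rho_brV x c a b));
  Eqn (brV_rho_brV y a c a); Eqn (brV_rho_brV z a a b); Eqn (mV a b c)]).
by mp_identity.
Qed.

Lemma dsum_pr_assoc : module_assoc prA prV mu ->
  associative prA -> associative prV -> associative dpr.
Proof.
case=> mu_prA mu_prV asA asV [x a] [y b] [z c].
apply: injective_projections; first exact: asA.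
apply: (eq_of_defects [:: Eqn (esym (mu_prA x y c)); Eqn (esym (mu_prA x z b));
  Eqn (mu_prA z x b); Eqn (mu_prA z y a); Eqn (mu_prV x b c); Eqn (mu_prV y a c);
  Eqn (esym (mu_prV y c a)); Eqn (esym (mu_prV z b a)); Eqn (asV a b c)]).
by mp_identity.
Qed.

Lemma dsum_leibniz : mp_rep brA prA rho mu ->
    (forall x a b, rho x (prV a b) = prV (rho x a) b + prV a (rho x b)) ->
    (forall x a b, brV a (mu x b) = - prV (rho x a) b + mu x (brV a b)) ->
  leibniz brA prA -> leibniz brV prV -> leibniz dbr dpr.
Proof.
case=> _ _ rho_prA mu_brA rho_prV brV_mu leibA leibV [x a] [y b] [z c].
apply: injective_projections; first exact: leibA.
apply: (eq_of_defects [:: Eqn (esym (mu_brA x y c)); Eqn (esym (mu_brA x z b));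
  Eqn (esym (rho_prA y z a)); Eqn (rho_prV x b c); Eqn (brV_mu y a c);
  Eqn (brV_mu z a b); Eqn (leibV a b c)]).
by mp_identity.
Qed.

(* The Malcev identity is cubic in its first argument; the instances at (x + y, 0)
   and (0, a + b) polarize it, which is where the factor 2 comes from. *)
Section FromDirectSumMalcev.
Hypothesis dbr_malcev : malcev_identity dbr.
Let mal X Y Z : eqn V := Eqn (congr1 snd (dbr_malcev X Y Z)).

Lemma malcev_rep_of_dsum : malcev_rep brA rho.
Proof.
move=> x y z a.
apply: (eq_of_defects2 two_neq0 [:: mal (x, 0) (z, 0) (0, a);
  eqn_sym (mal (x, 0) (0, a) (y, 0)); mal (y, 0) (z, 0) (0, a);
  eqn_sym (mal (z, 0) (0, a) (y, 0)); mal (0, a) (y, 0) (z, 0);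
  eqn_sym (mal (x + y, 0) (z, 0) (0, a)); mal (x + z, 0) (0, a) (y, 0);
  eqn_sym (mal (x, a) (y, 0) (z, 0))]).
by mp_identity.
Qed.

Lemma module_malcev_of_dsum : module_malcev brA brV rho.
Proof.
split; first exact: malcev_rep_of_dsum.
- move=> x y a b.
  apply: (eq_of_defects2 two_neq0 [:: eqn_sym (mal (x, 0) (y, 0) (0, b));
    mal (x, 0) (0, b) (y, 0); mal (x, 0) (0, b) (0, a); mal (y, 0) (0, b) (0, a);
    mal (0, a) (x, 0) (y, 0); eqn_sym (mal (0, a) (y, 0) (0, b));
    mal (0, a) (0, b) (y, 0); mal (0, b) (x, 0) (y, 0);
    eqn_sym (mal (x + y, 0) (0, b) (0, a)); eqn_sym (mal (0, a + b) (x, 0) (y, 0));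
    mal (x, a) (y, 0) (0, b); eqn_sym (mal (x, a) (0, b) (y, 0))]).
  by mp_identity.
- move=> x y a b.
  apply: (eq_of_defects2 two_neq0 [:: mal (x, 0) (y, 0) (0, b);
    mal (x, 0) (0, b) (y, 0); mal (x, 0) (0, b) (0, a); mal (y, 0) (0, b) (0, a);
    eqn_sym (mal (0, a) (x, 0) (y, 0)); mal (0, a) (y, 0) (0, b);
    mal (0, a) (0, b) (y, 0); eqn_sym (mal (0, b) (x, 0) (y, 0));
    eqn_sym (mal (x + y, 0) (0, b) (0, a)); mal (0, a + b) (x, 0) (y, 0);
    eqn_sym (mal (x, a) (y, 0) (0, b)); eqn_sym (mal (x, a) (0, b) (y, 0))]).
  by mp_identity.
- move=> x a b c.
  apply: (eq_of_defects2 two_neq0 [:: mal (x, 0) (0, b) (0, c);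
    eqn_sym (mal (0, a) (x, 0) (0, b)); mal (0, a) (0, b) (0, c);
    eqn_sym (mal (0, a) (0, c) (x, 0)); eqn_sym (mal (0, b) (0, c) (x, 0));
    eqn_sym (mal (0, c) (x, 0) (0, b)); mal (0, a + b) (0, c) (x, 0);
    mal (0, a + c) (x, 0) (0, b); eqn_sym (mal (x, a) (0, b) (0, c))]).
  by mp_identity.
Qed.

End FromDirectSumMalcev.

Lemma module_assoc_of_dsum : associative dpr -> module_assoc prA prV mu.
Proof.
move=> dpr_assoc; pose as3 X Y Z : eqn V := Eqn (congr1 snd (dpr_assoc X Y Z)).
split=> [x y a | x a b].
  by apply: (eq_of_defects [:: eqn_sym (as3 (x, 0) (y, 0) (0, a))]); mp_identity.
by apply: (eq_of_defects [:: as3 (x, 0) (0, a) (0, b)]); mp_identity.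
Qed.

Lemma module_malcev_poisson_of_dsum :
  malcev_identity dbr -> associative dpr -> leibniz dbr dpr ->
  module_malcev_poisson brA prA brV prV rho mu.
Proof.
move=> dbr_malcev dpr_assoc dsum_leib.
pose leib X Y Z : eqn V := Eqn (congr1 snd (dsum_leib X Y Z)).
have module_assoc := module_assoc_of_dsum dpr_assoc.
split; [exact: module_malcev_of_dsum | by [] | split | |].
- exact: malcev_rep_of_dsum.
- by case: module_assoc.
- by move=> x y a; apply: (eq_of_defects [:: eqn_sym (leib (0, a) (x, 0) (y, 0))]); mp_identity.
- by move=> x y a; apply: (eq_of_defects [:: eqn_sym (leib (x, 0) (y, 0) (0, a))]); mp_identity.
- by move=> x a b; apply: (eq_of_defects [:: leib (x, 0) (0, a) (0, b)]); mp_identity.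
by move=> x a b; apply: (eq_of_defects [:: leib (0, a) (x, 0) (0, b)]); mp_identity.
Qed.

Lemma dsum_malcev_poisson : module_malcev_poisson brA prA brV prV rho mu ->
    malcev_identity brA -> malcev_identity brV -> associative prA -> associative prV ->
    leibniz brA prA -> leibniz brV prV ->
  malcev_poisson dbr dpr.
Proof.
case=> module_mal module_assoc rep rho_prV brV_mu mA mV asA asV leibA leibV.
split; [split | | | |].
- exact: dsum_br_bilin.
- exact: dsum_br_anti.
- exact: dsum_br_malcev_identity.
- exact: dsum_pr_bilin.
- exact: dsum_pr_comm.
- exact: dsum_pr_assoc.
- exact: dsum_leibniz.
Qed.

End DirectSum.

Theorem mainTheorem5 (K : closedFieldType) (hK : [pchar K] =i pred0)
  (A V : vectType K) (brA prA : A -> A -> A) (brV prV : V -> V -> V)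
  (rho mu : A -> V -> V)
  (hA : malcev_poisson brA prA) (hV : malcev_poisson brV prV)
  (hrho : lin_end rho) (hmu : lin_end mu) :
  module_malcev_poisson brA prA brV prV rho mu <->
  malcev_poisson (dsum_br brA brV rho) (dsum_pr prA prV mu).
Proof.
have two_neq0 : (2%:R : K) != 0 by move/pcharf0P: hK => ->.
case: hA => [[brA_bilin brA_anti mA] prA_bilin prA_comm asA leibA].
case: hV => [[brV_bilin brV_anti mV] prV_bilin prV_comm asV leibV].
split=> [module_mp | [[_ _ dsum_mal] _ _ dsum_asc dsum_leib]].
  exact: dsum_malcev_poisson.
exact: module_malcev_poisson_of_dsum.
Qed.
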